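(* Let $k$ be an algebraically closed field of characteristic $p>0$ and $n\ge1$. Let $\mathbb{E}_{\ge0}(n,k) = \coprod_{r\ge0}\mathrm{Hom}_{\mathrm{gr}}((\mathbb{Z}/p\mathbb{Z})^r,\mathrm{GL}(n,k))$ and let $\pi : \mathbb{E}_{\ge0}(n,k)\to\mathrm{Mat}(n,k[T])^E$ be defined as follows: the unique element $\rho_0$ with $r=0$ is sent to $I_n$; for $r\ge1$, an element $\rho\in\mathrm{Hom}_{\mathrm{gr}}((\mathbb{Z}/p\mathbb{Z})^r,\mathrm{GL}(n,k))$, written uniquely as $\rho = \rho_{N_1,\ldots,N_r}$ with $(N_1,\ldots,N_r)\in\mathcal{N}_r(n,k)$, is sent to $\prod_{i=1}^r \mathrm{Exp}(T^{p^{i-1}}N_i)$. Then $\pi$ is surjective.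
   Context: A matrix $A(T)\in\mathrm{Mat}(n,k[T])$ is an exponential matrix if $A(T)A(T') = A(T+T')$ in $\mathrm{Mat}(n,k[T,T'])$ and $A(0)=I_n$; $\mathrm{Mat}(n,k[T])^E$ is the set of exponential matrices. $\mathcal{N}_r(n,k)$ is the set of $(N_1,\ldots,N_r)\in\mathrm{Mat}(n,k)^r$ with $N_i^p=O_n$ and $N_iN_j=N_jN_i$ for all $i,j$, and $\rho_{N_1,\ldots,N_r}(a_1,\ldots,a_r) = \prod_{i=1}^r(I_n+N_i)^{a_i}$; every group homomorphism $(\mathbb{Z}/p\mathbb{Z})^r\to\mathrm{GL}(n,k)$ is of this form for a unique tuple. For a matrix $M$ over a commutative $k$-algebra with $M^p=O_n$, $\mathrm{Exp}(M) := \sum_{i=0}^{p-1}\frac{1}{i!}M^i$. *)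

From HB Require Import structures.
From mathcomp Require Import all_boot all_order all_algebra.
Set Implicit Arguments. Unset Strict Implicit. Unset Printing Implicit Defensive.
Import GRing.Theory.
Local Open Scope ring_scope.

Section ExpMx.
Variable k : fieldType.

(* Two-variable polynomial ring k[T,T'] is {poly {poly k}}: the inner
   variable is T, the outer variable is T'. *)
Definition polyT (q : {poly k}) : {poly {poly k}} := q%:P.
Definition polyT' (q : {poly k}) : {poly {poly k}} := q^:P.
Definition polyTT' (q : {poly k}) : {poly {poly k}} :=
  (q^:P) \Po ('X + ('X)%:P).                                         (* q(T+T') *)

Definition is_exp_mx (n : nat) (A : 'M[{poly k}]_n) : Prop :=
  (map_mx polyT A *m map_mx polyT' A = map_mx polyTT' A) /\
  map_mx (fun q => q.[0]) A = 1%:M.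

Definition ExpP (p n : nat) (M : 'M[{poly k}]_n) : 'M[{poly k}]_n :=
  \sum_(i < p) ((i`!)%:R^-1 : k)%:P *: M ^+ i.

Definition in_Nr (p n r : nat) (N : 'I_r -> 'M[k]_n) : Prop :=
  (forall i, N i ^+ p = 0) /\ (forall i j, N i *m N j = N j *m N i).

(* pi(rho_{N_1..N_r}) = prod_{i=1}^r Exp(T^{p^{i-1}} N_i)  (0-indexed here) *)
Definition pi_mx (p n r : nat) (N : 'I_r -> 'M[k]_n) : 'M[{poly k}]_n :=
  \prod_(i < r) ExpP p ('X^(p ^ i) *: map_mx polyC (N i)).
End ExpMx.

From HB Require Import structures.
From mathcomp Require Import all_boot all_order all_algebra.
Set Implicit Arguments. Unset Strict Implicit. Unset Printing Implicit Defensive.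
Import GRing.Theory.
Local Open Scope ring_scope.

(* Write A(T) = sum_j T^j c_j. The identity A(T)A(T') = A(T+T') says exactly
   that c_0 = 1 and c_i c_j = C(i+j, j) c_(i+j). Hence c_a = c_1^a / a! for
   a < p and c_1^p = 0, while Lucas' theorem gives c_(a+pb) = c_a c_(pb) for
   a < p and shows that b |-> c_(pb) satisfies the same identities. Therefore
   A(T) = Exp(T c_1) A'(T^p) with A'(T) = sum_b T^b c_(pb), and iterating this
   factorization r times with p^r > deg A yields
   A = pi(c_1, c_p, ..., c_(p^(r-1))). *)

Section Lucas.
Variables (k : fieldType) (p : nat).
Hypothesis pchar_p : p \in [pchar k].

Let p_gt0 : (0 < p)%N := prime_gt0 (pcharf_prime pchar_p).

Lemma natr_bin_pchar j : ('C(p, j)%:R : k) = ((j == 0%N) + (j == p))%:R.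
Proof.
have [->|j_gt0] := posnP j; first by rewrite bin0 ltn_eqF.
case: (ltngtP j p) => [j_lt_p | p_lt_j | ->]; last by rewrite binn.
  apply/eqP; rewrite -(dvdn_pcharf pchar_p).
  by rewrite prime_dvd_bin ?(pcharf_prime pchar_p) ?j_gt0.
by rewrite bin_small.
Qed.

Lemma natr_binDp m i :
  ('C(p + m, i)%:R : k) = 'C(m, i)%:R + (if (p <= i)%N then 'C(m, i - p)%:R else 0).
Proof.
rewrite -binomial.Vandermonde natr_sum.
under eq_bigr do rewrite natrM natr_bin_pchar natrD mulrDl !mulr_natl.
under eq_bigr do rewrite !mulrb.
rewrite big_split -!big_mkcond /=.
by rewrite !(big_ord1_eq _ (fun j => 'C(m, i - j)%:R)) subn0 ltnS.
Qed.

Lemma lucas_natr m a b e : (a < p)%N -> (e < p)%N ->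
  ('C(p * m + a, p * b + e)%:R : k) = ('C(m, b) * 'C(a, e))%:R.
Proof.
move=> a_lt_p e_lt_p; elim: m b => [|m IHm] [|b].
- by rewrite !muln0 !add0n bin0 mul1n.
- by rewrite muln0 add0n bin0n mul0n bin_small // mulnS -addnA ltn_addr.
- rewrite muln0 add0n mulnS -addnA natr_binDp leqNgt e_lt_p addr0 !bin0.
  by have := IHm 0%N; rewrite muln0 add0n bin0.
rewrite mulnS -addnA natr_binDp IHm mulnS -addnA leq_addr addKn IHm.
by rewrite binS mulnDl natrD addrC.
Qed.

Lemma lucas_natr_expn e m b : ('C(p ^ e * m, p ^ e * b)%:R : k) = 'C(m, b)%:R.
Proof.
elim: e => [|e IHe]; first by rewrite !mul1n.
have := lucas_natr (p ^ e * m) (p ^ e * b) p_gt0 p_gt0.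
by rewrite !addn0 bin0 muln1 !mulnA -expnS IHe.
Qed.

Lemma natr_fact_neq0 a : (a < p)%N -> (a`!%:R : k) != 0.
Proof.
elim: a => [|a IHa] a_lt_p; first by rewrite fact0 oner_neq0.
rewrite factS natrM mulf_neq0 ?IHa ?(ltnW a_lt_p) // -(dvdn_pcharf pchar_p).
by apply: contraTN a_lt_p => /(dvdn_leq (ltn0Sn a)); rewrite leqNgt.
Qed.

Lemma natr_fact_pchar : (p`!%:R : k) = 0.
Proof. by apply/eqP; rewrite -(dvdn_pcharf pchar_p) dvdn_fact // p_gt0 leqnn. Qed.
End Lucas.

Lemma scalemx_exprn (R : comPzRingType) n (s : R) (M : 'M[R]_n) a :
  (s *: M) ^+ a = s ^+ a *: M ^+ a.
Proof.
rewrite -!mul_scalar_mx !mulmxE exprMn_comm ?rmorphXn //.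
exact: comm_scalar_mx.
Qed.

Lemma map_mx_comp_monomial (R : comNzRingType) n (q : {poly R}) j (M : 'M[R]_n) :
  map_mx (comp_poly q) ('X^j *: map_mx polyC M) = q ^+ j *: map_mx polyC M.
Proof.
rewrite (map_mxZ (comp_poly q)) rmorphXn /= comp_polyX; congr (_ *: _).
by apply/matrixP => a b; rewrite !mxE comp_polyC.
Qed.

Lemma ExpP_comp_poly (k : fieldType) p n (q : {poly k}) (M : 'M[{poly k}]_n) :
  map_mx (comp_poly q) (ExpP p M) = ExpP p (map_mx (comp_poly q) M).
Proof.
rewrite /ExpP raddf_sum; apply: eq_bigr => i _ /=.
by rewrite (map_mxZ (comp_poly q)) /= comp_polyC rmorphXn.
Qed.

Section ExpSeq.
Variables (k : fieldType) (n : nat).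

Definition is_exp_seq (c : nat -> 'M[k]_n) : Prop :=
  c 0%N = 1 /\ forall i j, c i * c j = c (i + j)%N *+ 'C(i + j, j).

Definition mx_of_coefs (c : nat -> 'M[k]_n) (d : nat) : 'M[{poly k}]_n :=
  \sum_(j < d) 'X^j *: map_mx polyC (c j).

Lemma mulmx_monomials i j (M N : 'M[k]_n) :
  ('X^i *: map_mx polyC M) * ('X^j *: map_mx polyC N) =
  'X^(i + j) *: map_mx polyC (M * N).
Proof. by rewrite -!mulmxE -scalemxAl -scalemxAr scalerA -exprD map_mxM. Qed.

Variable c : nat -> 'M[k]_n.
Hypothesis c_exp : is_exp_seq c.

Lemma exp_seq_commute i j : c i * c j = c j * c i.
Proof.
case: c_exp => _ cM.
by rewrite !cM [(j + i)%N]addnC -bin_sub ?leq_addl // addnK.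
Qed.

Lemma exp_seq_expr1 a : c 1%N ^+ a = c a *+ a`!.
Proof.
case: c_exp => c0 cM; elim: a => [|a IHa]; first by rewrite c0.
by rewrite exprS IHa mulrnAr cM add1n binSn -mulrnA factS.
Qed.

Variable p : nat.
Hypothesis pchar_p : p \in [pchar k].

Let p_gt0 : (0 < p)%N := prime_gt0 (pcharf_prime pchar_p).

Lemma exp_seq_nilpotent : c 1%N ^+ p = 0.
Proof. by rewrite exp_seq_expr1 -scaler_nat natr_fact_pchar // scale0r. Qed.

Lemma exp_seq_mulp a b : (a < p)%N -> c a * c (p * b) = c (a + p * b).
Proof.
case: c_exp => _ cM a_lt_p; rewrite cM -scaler_nat addnC -[X in 'C(_, X)]addn0.
by rewrite lucas_natr // binn bin0 scale1r.
Qed.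

Lemma exp_seq_scale_expn e : is_exp_seq (fun b => c (p ^ e * b)).
Proof.
case: c_exp => c0 cM; split=> [|i j]; first by rewrite muln0.
by rewrite cM -mulnDr -!scaler_nat lucas_natr_expn.
Qed.

Lemma exp_seq_divided_power a : (a < p)%N -> c a = (a`!%:R)^-1 *: c 1%N ^+ a.
Proof.
move=> a_lt_p.
by rewrite exp_seq_expr1 -scaler_nat scalerK ?(natr_fact_neq0 pchar_p).
Qed.

Lemma ExpP_exp_seq : ExpP p ('X *: map_mx polyC (c 1%N)) = mx_of_coefs c p.
Proof.
apply: eq_bigr => a _.
rewrite [c a]exp_seq_divided_power // map_mxZ rmorphXn scalemx_exprn.
by rewrite !scalerA mulrC.
Qed.

Lemma mx_of_coefs_mulp d :
  mx_of_coefs c (p * d) = ExpP p ('X *: map_mx polyC (c 1%N)) *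
    map_mx (comp_poly 'X^p) (mx_of_coefs (fun b => c (p * b)) d).
Proof.
elim: d => [|d IHd]; first by rewrite muln0 /mx_of_coefs !big_ord0 raddf0 mulr0.
rewrite /mx_of_coefs mulnSr big_split_ord /= -/(mx_of_coefs c (p * d)) IHd.
rewrite big_ord_recr /= raddfD mulrDr /=; congr (_ + _).
rewrite map_mx_comp_monomial -exprM ExpP_exp_seq mulr_suml; apply: eq_bigr => a _.
by rewrite mulmx_monomials exp_seq_mulp // [(a + _)%N]addnC.
Qed.

End ExpSeq.

Lemma pi_mx_recl (k : fieldType) p n r (N : 'I_r.+1 -> 'M[k]_n) :
  pi_mx p N = ExpP p ('X *: map_mx polyC (N ord0)) *
    map_mx (comp_poly 'X^p) (pi_mx p (fun i : 'I_r => N (lift ord0 i))).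
Proof.
rewrite /pi_mx big_ord_recl rmorph_prod /=; congr (_ * _); apply: eq_bigr => i _.
by rewrite ExpP_comp_poly map_mx_comp_monomial -exprM -expnS.
Qed.

Section Factorization.
Variables (k : fieldType) (p : nat) (n : nat).
Hypothesis pchar_p : p \in [pchar k].

Lemma exp_seq_pi_mx r (c : nat -> 'M[k]_n) : is_exp_seq c ->
  mx_of_coefs c (p ^ r)%N = pi_mx p (fun i : 'I_r => c (p ^ i)%N).
Proof.
elim: r c => [|r IHr] c c_exp.
  by rewrite /mx_of_coefs /pi_mx big_ord1 big_ord0 c_exp.1 scale1r map_mx1.
rewrite expnS mx_of_coefs_mulp // IHr; last exact: (exp_seq_scale_expn c_exp pchar_p 1).
rewrite pi_mx_recl; congr (_ * map_mx _ _).
by apply: eq_bigr => i _; rewrite lift0 expnS.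
Qed.

Lemma exp_seq_in_Nr r (c : nat -> 'M[k]_n) : is_exp_seq c ->
  in_Nr p (fun i : 'I_r => c (p ^ i)%N).
Proof.
move=> c_exp; split=> [i|i j]; last exact: exp_seq_commute.
have := exp_seq_nilpotent (exp_seq_scale_expn c_exp pchar_p i) pchar_p.
by rewrite muln1.
Qed.
End Factorization.

Section Coefficients.
Variables (k : fieldType) (n : nat).

Lemma coef_polyTT' (q : {poly k}) i j :
  ((polyTT' q)`_j)`_i = q`_(i + j) *+ 'C(i + j, j).
Proof.
elim/poly_ind: q i j => [|q a IHq] i j.
  by rewrite /polyTT' !raddf0 !coef0 mul0rn.
rewrite /polyTT' rmorphD rmorphM /= map_polyX map_polyC /= rmorphD rmorphM /=.
rewrite comp_polyX comp_polyC mulrDr !coefD coefMX coefMC coefC -/(polyTT' q).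
case: i j => [|i] [|j] /=; rewrite ?coef0 ?coefD ?coefMX ?coefC /=.
all: rewrite ?add0r ?addr0 ?IHq ?addn0 ?add0n ?bin0 ?binn ?mulr1n //.
rewrite !addSn !addnS (binS (i + j).+1 j) -mulrnDr; congr (_ *+ _); exact: addnC.
Qed.

Definition coefmx (A : 'M[{poly k}]_n) j : 'M[k]_n :=
  map_mx (fun q : {poly k} => q`_j) A.

Lemma exp_mx_coefmx (A : 'M[{poly k}]_n) : is_exp_mx A -> is_exp_seq (coefmx A).
Proof.
case=> AM A0; split=> [|i j]; apply/matrixP => a b.
  by have := congr1 (fun M : 'M[k]_n => M a b) A0; rewrite !mxE horner_coef0.
have := congr1 (fun M : 'M[{poly {poly k}}]_n => ((M a b)`_j)`_i) AM.
rewrite !mxE coef_polyTT' mulmxnE mxE => <-; rewrite !coef_sum.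
by apply: eq_bigr => l _; rewrite !mxE /polyT /polyT' coefCM coef_map /= coefMC.
Qed.

Lemma mx_of_coefsK (A : 'M[{poly k}]_n) d :
  (forall a b, size (A a b) <= d)%N -> mx_of_coefs (coefmx A) d = A.
Proof.
move=> size_A; apply/matrixP => a b.
rewrite summxE -[RHS](take_poly_id (size_A a b)) /take_poly poly_def.
apply: eq_bigr => j _.
by rewrite !mxE mulrC mul_polyC.
Qed.
End Coefficients.

Theorem lemma2p2 (k : closedFieldType) (p : nat) (hp : p \in [pchar k])
  (n : nat) (hn : (0 < n)%N) (A : 'M[{poly k}]_n) :
  is_exp_mx A ->
  exists r : nat, exists N : 'I_r -> 'M[k]_n, in_Nr p N /\ A = pi_mx p N.
Proof.
move=> A_exp; have c_exp := exp_mx_coefmx A_exp.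
pose d := \max_(ab : 'I_n * 'I_n) size (A ab.1 ab.2).
exists d, (fun i => coefmx A (p ^ i)%N); split; first exact: exp_seq_in_Nr.
rewrite -exp_seq_pi_mx // mx_of_coefsK // => a b.
apply: leq_trans (ltnW (ltn_expl d (prime_gt1 (pcharf_prime hp)))).
exact: (leq_bigmax (a, b) (F := fun ab => size (A ab.1 ab.2))).
Qed.
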